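(* Let $X$ be an $n$-dimensional polyhedral normed space and let $Y \subseteq X$ be a $k$-dimensional subspace, where $1 \leq k \leq n-1$. Then there exists a projection $P \in \mathcal{P}_{\min}(X, Y)$ with at least $n$ norming pairs.
   Context: A normed space $X=(\mathbb{R}^n,\|\cdot\|)$ is polyhedral if its unit ball $B_X$ is a convex polytope; then $\mathrm{ext}\,B_X$ and $\mathrm{ext}\,B_{X^*}$ (extreme points of the unit balls of $X$ and its dual) are finite. A projection onto $Y$ is a linear $P:X\to Y$ with $P|_Y=\mathrm{id}_Y$; $\lambda(Y,X)$ is the infimum of the operator norms of such projections and $\mathcal{P}_{\min}(X,Y)$ is the set of projections of norm $\lambda(Y,X)$. A norming pair for a projection $P$ is a pair $(x,f)\in \mathrm{ext}\,B_X\times \mathrm{ext}\,B_{X^*}$ with $f(P(x))=\|P\|$. *)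

From HB Require Import structures.
From mathcomp Require Import all_boot all_order all_algebra.
From mathcomp Require Import boolp classical_sets reals.
Set Implicit Arguments. Unset Strict Implicit. Unset Printing Implicit Defensive.
Import Order.TTheory GRing.Theory Num.Theory.
Local Open Scope ring_scope.
Local Open Scope classical_set_scope.

(* X = (R^n, N): vectors are row vectors 'rV[R]_n, linear maps are matrices
   acting on the right (x |-> x *m P), functionals are represented by row
   vectors f acting by the standard pairing. *)
Section Defs.
Variable R : realType.
Variable n : nat.
Notation vec := 'rV[R]_n.

Definition fapp (f x : vec) : R := \sum_(i < n) f 0 i * x 0 i.

Definition is_norm (N : vec -> R) : Prop :=
  [/\ forall x, 0 <= N x,
      forall x, N x = 0 -> x = 0,
      forall (a : R) x, N (a *: x) = `|a| * N x
    & forall x y, N (x + y) <= N x + N y].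

Definition unit_ball (N : vec -> R) : set vec := [set x | N x <= 1].

Definition conv_hull (m : nat) (V : 'I_m -> vec) : set vec :=
  [set x | exists w : 'I_m -> R,
     [/\ forall i, 0 <= w i, \sum_(i < m) w i = 1
       & x = \sum_(i < m) w i *: V i]].

Definition polytope (S : set vec) : Prop :=
  exists m (V : 'I_m -> vec), S = conv_hull V.

Definition polyhedral_norm (N : vec -> R) : Prop :=
  is_norm N /\ polytope (unit_ball N).

Definition dual_unit_ball (N : vec -> R) : set vec :=
  [set f | forall x, N x <= 1 -> fapp f x <= 1].

Definition ext (S : set vec) : set vec :=
  [set x | S x /\ forall y z (t : R), S y -> S z -> 0 < t -> t < 1 ->
             x = t *: y + (1 - t) *: z -> y = z].

Definition opnorm (N : vec -> R) (P : 'M[R]_n) : R :=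
  sup [set N (x *m P) | x in unit_ball N].

(* P is a projection of X onto the subspace Y (= row space of the matrix Y) *)
Definition is_projection (Y P : 'M[R]_n) : Prop :=
  (forall x : vec, (x *m P <= Y)%MS) /\
  (forall y : vec, (y <= Y)%MS -> y *m P = y).

Definition lambda (N : vec -> R) (Y : 'M[R]_n) : R :=
  inf [set opnorm N P | P in is_projection Y].

Definition minimal_projection (N : vec -> R) (Y P : 'M[R]_n) : Prop :=
  is_projection Y P /\ opnorm N P = lambda N Y.

Definition norming_pair (N : vec -> R) (P : 'M[R]_n) (x f : vec) : Prop :=
  [/\ ext (unit_ball N) x, ext (dual_unit_ball N) f
    & fapp f (x *m P) = opnorm N P].

End Defs.

From HB Require Import structures.
From mathcomp Require Import all_boot all_order all_algebra.
From mathcomp Require Import boolp classical_sets reals.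
From mathcomp Require Import ring lra zify.
Import Order.TTheory GRing.Theory Num.Theory.
Local Open Scope ring_scope.

(* Write a projection onto Y as P = (Q0 + K^T G) B, where B is a basis of Y,
   B Q0 = 1 and the rows of K span the annihilator of Y; G ranges freely over
   (n-k) x k matrices.  Since B_X and B_{X^*} are polytopes, ||P|| is the
   maximum of f(x P) over their finitely many extreme points x, f, so
   minimising ||P|| is the linear program "minimise t subject to f(x P) <= t"
   in the (n-k)k + 1 unknowns (G, t).  Its feasible set contains no line and t
   is bounded below, so the minimum is attained at a vertex, where at least
   (n-k)k + 1 >= n constraints are active; each active constraint is a norming
   pair.  That every x is normed by an extreme point of B_{X^*} is Farkas'
   lemma. *)

Lemma ler_sum_term {R : realType} {I : finType} (F : I -> R) j :
  (forall i, 0 <= F i) -> F j <= \sum_i F i.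
Proof.
move=> F0; rewrite (bigD1 j) //= -[leLHS]addr0 lerD2l.
by apply: sumr_ge0 => i _.
Qed.

Section Pairing.
Context {R : realType}.

Lemma fappC {m} (u v : 'rV[R]_m) : fapp u v = fapp v u.
Proof. by apply: eq_bigr => i _; rewrite mulrC. Qed.

Lemma fappDr {m} (u v w : 'rV[R]_m) : fapp u (v + w) = fapp u v + fapp u w.
Proof. by rewrite /fapp -big_split; apply: eq_bigr => i _; rewrite !mxE mulrDr. Qed.

Lemma fappZr {m} (c : R) (u v : 'rV[R]_m) : fapp u (c *: v) = c * fapp u v.
Proof. by rewrite /fapp mulr_sumr; apply: eq_bigr => i _; rewrite !mxE mulrCA. Qed.

Lemma fappDl {m} (u v w : 'rV[R]_m) : fapp (v + w) u = fapp v u + fapp w u.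
Proof. by rewrite fappC fappDr fappC (fappC w). Qed.

Lemma fappZl {m} (c : R) (u v : 'rV[R]_m) : fapp (c *: v) u = c * fapp v u.
Proof. by rewrite fappC fappZr fappC. Qed.

Lemma fapp0r {m} (u : 'rV[R]_m) : fapp u 0 = 0.
Proof. by rewrite -(scale0r 0) fappZr mul0r. Qed.

Lemma fappNr {m} (u v : 'rV[R]_m) : fapp u (- v) = - fapp u v.
Proof. by rewrite -scaleN1r fappZr mulN1r. Qed.

Lemma fappNl {m} (u v : 'rV[R]_m) : fapp (- v) u = - fapp v u.
Proof. by rewrite fappC fappNr fappC. Qed.

Lemma fappBr {m} (u v w : 'rV[R]_m) : fapp u (v - w) = fapp u v - fapp u w.
Proof. by rewrite fappDr fappNr. Qed.

Lemma fappBl {m} (u v w : 'rV[R]_m) : fapp (v - w) u = fapp v u - fapp w u.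
Proof. by rewrite fappDl fappNl. Qed.

Lemma fapp_sumr {m} (u : 'rV[R]_m) (I : Type) (r : seq I) (P : pred I) F :
  fapp u (\sum_(i <- r | P i) F i) = \sum_(i <- r | P i) fapp u (F i).
Proof. by elim/big_rec2: _ => [|i y v _ <-]; rewrite ?fapp0r ?fappDr. Qed.

Lemma fapp_self_gt0 {m} (u : 'rV[R]_m) : u != 0 -> 0 < fapp u u.
Proof.
move=> u0; have [i ui] : exists i, u 0 i != 0.
  apply/existsP; apply: contraR u0 => /existsPn u0; apply/eqP/rowP => i.
  by move: (u0 i); rewrite negbK mxE => /eqP.
rewrite /fapp (bigD1 i) //= ltr_pwDl //; first by rewrite -expr2 exprn_even_gt0.
by apply: sumr_ge0 => j _; rewrite -expr2 sqr_ge0.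
Qed.

Lemma fapp_delta {m} (u : 'rV[R]_m) i : fapp u (delta_mx 0 i) = u 0 i.
Proof.
rewrite /fapp (bigD1 i) //= big1 => [|j /negPf ji]; first by rewrite mxE !eqxx mulr1 addr0.
by rewrite mxE ji andbF mulr0.
Qed.

Lemma fapp_row_mx_scalar {m} (f x : 'rV[R]_m) (mu al : R) :
  fapp (row_mx f mu%:M) (row_mx x al%:M) = fapp f x + mu * al.
Proof.
rewrite /fapp big_split_ord /= big_ord1; congr (_ + _).
  by apply: eq_bigr => i _; rewrite !row_mxEl.
by rewrite !row_mxEr !mxE.
Qed.

Lemma fapp_mulmx {m p} (f : 'rV[R]_m) (A : 'M[R]_(p, m)) (x : 'rV[R]_p) :
  fapp f (x *m A) = fapp (f *m A^T) x.
Proof.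
rewrite /fapp; under eq_bigr do rewrite mxE big_distrr.
rewrite exchange_big; apply: eq_bigr => j _; rewrite mxE big_distrl.
by apply: eq_bigr => i _; rewrite !mxE /=; ring.
Qed.

Lemma fapp_linear {m} (phi : 'rV[R]_m -> R) :
  (forall c u v, phi (c *: u + v) = c * phi u + phi v) ->
  forall u, phi u = fapp (\row_i phi (delta_mx 0 i)) u.
Proof.
move=> phiL u; have phi0 : phi 0 = 0.
  by have := phiL 1 0 0; rewrite scaler0 addr0 mul1r; lra.
rewrite {1}(row_sum_delta u) /fapp; elim/big_rec2: _ => [//|i y v _ <-].
by rewrite phiL mxE mulrC.
Qed.

Lemma farkas {m k} (A : 'I_k -> 'rV[R]_m) (b : 'rV[R]_m) :
  (exists2 l : 'I_k -> R, forall i, 0 <= l i & b = \sum_i l i *: A i) \/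
  exists2 y, forall i, fapp y (A i) <= 0 & 0 < fapp y b.
Proof.
elim: k A b => [|k IH] A b.
  have [->|b0] := eqVneq b 0; first by left; exists (fun=> 0); rewrite ?big_ord0.
  by right; exists b => [[]|]; last exact: fapp_self_gt0.
set A0 := A ord0; set A' := A \o lift ord0.
have splitP (P : 'I_k.+1 -> Prop) : P ord0 -> (forall j, P (lift ord0 j)) -> forall i, P i.
  by move=> P0 P' i; case: (unliftP ord0 i) => [j ->|->].
have [[l l0 ->]|[y yA' yb]] := IH A' b.
  left; exists (fun i => if unlift ord0 i is Some j then l j else 0).
    by apply: splitP; rewrite ?unlift_none // => j; rewrite liftK.
  by rewrite big_ord_recl unlift_none scale0r add0r; apply: eq_bigr => j _; rewrite liftK.
have [yA0|yA0] := lerP (fapp y A0) 0; first by right; exists y => //; apply: splitP.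
(* Fourier-Motzkin step: g kills A0 and maps into the hyperplane y^perp. *)
pose g x := fapp y A0 *: x - fapp y x *: A0.
have [[l l0 gbE]|[z zg zb]] := IH (g \o A') (g b).
  left; pose c := \sum_j l j * fapp y (A' j).
  exists (fun i => if unlift ord0 i is Some j then l j else (fapp y b - c) / fapp y A0).
    apply: splitP => [|j]; rewrite ?liftK // unlift_none.
    apply: divr_ge0 (ltW yA0); rewrite subr_ge0.
    apply: le_trans (ltW yb); apply: sumr_le0 => j _; exact: mulr_ge0_le0.
  rewrite big_ord_recl unlift_none; under eq_bigr do rewrite liftK.
  apply: (scalerI (lt0r_neq0 yA0)); rewrite scalerDr scalerA mulrC divfK ?lt0r_neq0 //.
  have gS : \sum_j l j *: (g \o A') j = fapp y A0 *: \sum_j l j *: A' j - c *: A0.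
    rewrite scaler_sumr scaler_suml -sumrB; apply: eq_bigr => j _.
    by rewrite /g scalerBr !scalerA (mulrC (l j)).
  move: gbE; rewrite gS /g => /eqP; rewrite subr_eq => /eqP ->.
  by rewrite scalerBl [RHS]addrC -addrA (addrC (- _)).
right; exists (fapp y A0 *: z - fapp z A0 *: y).
  have zgE x : fapp (fapp y A0 *: z - fapp z A0 *: y) x = fapp z (g x).
    by rewrite /g fappBl fappBr !fappZl !fappZr; ring.
  apply: splitP => [|j]; rewrite zgE; last exact: zg.
  by rewrite /g subrr fapp0r.
by rewrite fappBl !fappZl; move: zb; rewrite /g fappBr !fappZr; lra.
Qed.

End Pairing.

Section Polyhedron.
Context {R : realType} {r : nat} {I : finType}.
Variables (a : I -> 'rV[R]_r) (b : I -> R).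

Definition feasible (u : 'rV[R]_r) := forall i, fapp (a i) u <= b i.

Definition active (u : 'rV[R]_r) : {set I} := [set i | fapp (a i) u == b i].

Definition vertex (u : 'rV[R]_r) :=
  feasible u /\ forall d, (forall i, i \in active u -> fapp (a i) d = 0) -> d = 0.

Definition pointed :=
  forall u d, (forall s : R, feasible (u + s *: d)) -> d = 0.

Lemma vertex_active_inj {v w} : vertex v -> active v = active w -> w = v.
Proof.
move=> [_ hv] e; apply/eqP; rewrite -subr_eq0; apply/eqP; apply: hv => i iv.
have iw : i \in active w by rewrite -e.
by move: iv iw; rewrite !inE fappBr => /eqP-> /eqP->; rewrite subrr.
Qed.

Lemma vertices_finite : exists m (vs : 'I_m -> 'rV[R]_r),
  injective vs /\ forall v, vertex v <-> exists i, vs i = v.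
Proof.
have [s sV Vs] : exists2 s : seq 'rV[R]_r,
    forall v, v \in s -> vertex v & forall v, vertex v -> v \in s.
  suff [s sV Vs] : exists2 s : seq 'rV[R]_r, forall v, v \in s -> vertex v &
      forall v, vertex v -> active v \in enum [set: {set I}] -> v \in s.
    by exists s => // v vv; apply: Vs; rewrite // mem_enum inE.
  elim: (enum _) => [|J Js [s sV Vs]]; first by exists [::].
  have [[w [vw wJ]]|nJ] := pselect (exists w, vertex w /\ active w = J); last first.
    exists s => // v vv; rewrite in_cons => /orP[/eqP vJ|/(Vs _ vv)//].
    by case: nJ; exists v.
  exists (w :: s) => [v|v vv]; rewrite !in_cons; first by case/orP=> [/eqP->|/sV].
  case/orP=> [/eqP vJ|/(Vs _ vv)->]; last by rewrite orbT.
  by rewrite (vertex_active_inj vw (etrans wJ (esym vJ))) eqxx.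
exists (size (undup s)), (fun i => (undup s)`_i); split.
  by move=> i j /eqP; rewrite nth_uniq ?undup_uniq // => /eqP/val_inj.
move=> v; split => [/Vs vs|[i <-]]; last by apply: sV; rewrite -mem_undup mem_nth.
have vi : (index v (undup s) < size (undup s))%N by rewrite index_mem mem_undup.
by exists (Ordinal vi); rewrite /= nth_index ?mem_undup.
Qed.

Lemma vertex_ext v : vertex v -> ext feasible v.
Proof.
move=> [fv hv]; split => // y z t fy fz t0 t1 vE.
apply/eqP; rewrite -subr_eq0; apply/eqP; apply: hv => i.
rewrite inE vE fappDr !fappZr fappBr => /eqP vi.
have := fy i; have := fz i; nra.
Qed.

Lemma card_active_vertex v : vertex v -> (r <= #|active v|)%N.
Proof.
move=> [_ hv]; rewrite leqNgt; apply/negP => hlt.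
pose A := \matrix_(j < r, l < #|active v|) a (enum_val l) 0 j.
have /rowV0Pn[d /sub_kermxP dA /eqP[]] : kermx A != 0.
  by rewrite -mxrank_eq0 mxrank_ker -lt0n subn_gt0 (leq_ltn_trans (rank_leq_col A)).
apply: hv => j jv; move/matrixP: dA => /(_ 0 (enum_rank_in jv j)).
rewrite !mxE => <-; rewrite /fapp; apply: eq_bigr => l _.
by rewrite mxE enum_rankK_in // mulrC.
Qed.

Lemma feasible_ray_step {u d} : feasible u ->
  (forall i, i \in active u -> fapp (a i) d = 0) -> (exists i, 0 < fapp (a i) d) ->
  exists2 s, 0 <= s & feasible (u + s *: d) /\ active u \proper active (u + s *: d).
Proof.
move=> fu du [i1 di1].
have [i0 di0 i0min] := @arg_minP _ _ _ i1 (fun i => 0 < fapp (a i) d)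
  (fun i => (b i - fapp (a i) u) / fapp (a i) d) di1.
pose s := (b i0 - fapp (a i0) u) / fapp (a i0) d.
have s0 : 0 <= s by rewrite divr_ge0 ?subr_ge0 ?fu ?ltW.
exists s => //; split.
  move=> i; rewrite fappDr fappZr.
  have [di|di] := ltrP 0 (fapp (a i) d).
    by have := i0min i di; rewrite ler_pdivlMr // mulrC; lra.
  have : s * fapp (a i) d <= 0 by apply: mulr_ge0_le0.
  by have := fu i; lra.
apply/properP; split.
  apply/fintype.subsetP => i; rewrite !inE fappDr fappZr => /eqP ui.
  by rewrite du ?inE ?ui // mulr0 addr0.
exists i0; first by rewrite inE fappDr fappZr /s divfK ?lt0r_neq0 // addrC subrK.
by apply/negP => /du; lra.
Qed.

Section Descent.
Variables (c : 'rV[R]_r) (m0 : R).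
Hypothesis pointedP : pointed.
Hypothesis c_bounded : forall u, feasible u -> m0 <= fapp c u.

Lemma recession_ge0 {u d} : feasible u -> (forall i, fapp (a i) d <= 0) -> 0 <= fapp c d.
Proof.
move=> fu dle0; rewrite leNgt; apply/negP => cd.
pose s := (fapp c u - m0 + 1) / - fapp c d.
have s0 : 0 <= s by rewrite divr_ge0 ?oppr_ge0 ?ltW //; have := c_bounded _ fu; lra.
have : feasible (u + s *: d).
  move=> i; rewrite fappDr fappZr.
  have : s * fapp (a i) d <= 0 by apply: mulr_ge0_le0.
  by have := fu i; lra.
move/c_bounded; rewrite fappDr fappZr /s -mulrA invrN mulNr mulVf ?lt_eqF //.
by rewrite mulrN1; lra.
Qed.

Lemma improve_nonvertex {u} : feasible u -> ~ vertex u ->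
  exists2 u', feasible u' /\ fapp c u' <= fapp c u & active u \proper active u'.
Proof.
move=> fu nvu.
have [d [du dn0]] : exists d, (forall i, i \in active u -> fapp (a i) d = 0) /\ d != 0.
  apply: contrapT => nd; apply: nvu; split => // d du; apply: contrapT => /eqP dn0.
  by apply: nd; exists d.
have ray d' : (forall i, i \in active u -> fapp (a i) d' = 0) -> fapp c d' <= 0 ->
    (exists i, 0 < fapp (a i) d') ->
    exists2 u', feasible u' /\ fapp c u' <= fapp c u & active u \proper active u'.
  move=> du' cd' pos; have [s s0 [fs pr]] := feasible_ray_step fu du' pos.
  exists (u + s *: d') => //; split => //.
  have : s * fapp c d' <= 0 by apply: mulr_ge0_le0.
  by rewrite fappDr fappZr; lra.
have duN : forall i, i \in active u -> fapp (a i) (- d) = 0.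
  by move=> i /du; rewrite fappNr => ->; rewrite oppr0.
wlog cd : d du dn0 duN / fapp c d <= 0.
  move=> wl; have [|cd] := lerP (fapp c d) 0; first exact: wl.
  by apply: (wl (- d)); rewrite ?opprK ?oppr_eq0 // fappNr; lra.
have [|nopos] := pselect (exists i, 0 < fapp (a i) d); first exact: ray.
have dle0 i : fapp (a i) d <= 0 by rewrite leNgt; apply/negP => ?; apply: nopos; exists i.
have cd0 : fapp c d = 0 by apply/eqP; rewrite eq_le cd (recession_ge0 fu dle0).
have [|noneg] := pselect (exists i, 0 < fapp (a i) (- d)).
  by apply: ray; rewrite // fappNr cd0 oppr0.
case/eqP: dn0; apply: (pointedP u) => s i; rewrite fappDr fappZr.
suff -> : fapp (a i) d = 0 by rewrite mulr0 addr0.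
apply/eqP; rewrite eq_le dle0 leNgt; apply/negP => ?.
by apply: noneg; exists i; rewrite fappNr oppr_gt0.
Qed.

Lemma exists_vertex_le {u} : feasible u -> exists2 v, vertex v & fapp c v <= fapp c u.
Proof.
move: {2}(#|I| - #|active u|)%N (leqnn (#|I| - #|active u|)) => k.
elim: k u => [|k IH] u hk fu; have [vu|nvu] := pselect (vertex u); try by exists u.
  have [u' _ /proper_card] := improve_nonvertex fu nvu.
  by have := max_card (active u'); lia.
have [u' [fu' cu'] /proper_card pr] := improve_nonvertex fu nvu.
have [|v vv cv] := IH u' _ fu'; first by have := max_card (active u'); lia.
by exists v => //; apply: le_trans cu'.
Qed.

Lemma exists_vertex_min {u0} : feasible u0 ->
  exists2 v, vertex v & forall u, feasible u -> fapp c v <= fapp c u.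
Proof.
move=> fu0; have [m [vs [_ hvs]]] := vertices_finite.
have [_ /hvs[i0 _] _] := exists_vertex_le fu0.
have [i _ imin] := @arg_minP _ _ _ i0 xpredT (fun i => fapp c (vs i)) isT.
exists (vs i); first by apply/hvs; exists i.
move=> u fu; have [_ /hvs[j <-] cvu] := exists_vertex_le fu.
exact: le_trans (imin j isT) cvu.
Qed.

End Descent.

Lemma box_vertex_min (C : 'I_r -> R) c u0 :
  (forall u, feasible u -> forall j, `|u 0 j| <= C j) -> feasible u0 ->
  exists2 v, vertex v & forall u, feasible u -> fapp c v <= fapp c u.
Proof.
move=> box; apply: (@exists_vertex_min c (- \sum_j `|c 0 j| * C j)).
  move=> u d hs; apply/rowP => j; rewrite mxE; apply/eqP; apply: contraT => dj.
  pose s := (C j + 1 + `|u 0 j|) / d 0 j.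
  have := box _ (hs s) j; rewrite !mxE /s divfK //.
  have := box _ (hs 0) j; rewrite scale0r addr0 => /(le_trans (normr_ge0 _)).
  by have := ler_norm (- u 0 j); rewrite normrN ler_norml; lra.
move=> u fu; rewrite /fapp -sumrN; apply: ler_sum => j _.
have : `|c 0 j * u 0 j| <= `|c 0 j| * C j by rewrite normrM ler_wpM2l ?box.
by rewrite ler_norml => /andP[].
Qed.

End Polyhedron.

Arguments vertex_ext {R r I a b v}.
Arguments card_active_vertex {R r I a b v}.
Arguments box_vertex_min {R r I a b} C c {u0}.
Arguments exists_vertex_min {R r I a b} c m0 _ _ {u0}.

Section Norm.
Context {R : realType} {n : nat} {N : 'rV[R]_n -> R}.
Hypothesis hN : is_norm N.

Lemma is_normZ c x : N (c *: x) = `|c| * N x.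
Proof. by case: hN. Qed.

Lemma is_norm_ge0 x : 0 <= N x.
Proof. by case: hN. Qed.

Lemma is_norm0 : N 0 = 0.
Proof. by rewrite -(scale0r 0) is_normZ normr0 mul0r. Qed.

Lemma is_normN x : N (- x) = N x.
Proof. by rewrite -scaleN1r is_normZ normrN normr1 mul1r. Qed.

Lemma is_norm_eq0 x : (N x == 0) = (x == 0).
Proof.
apply/eqP/eqP => [|->]; last exact: is_norm0.
by case: hN => _ N0 _ _; apply: N0.
Qed.

Lemma is_norm_gt0 x : (0 < N x) = (x != 0).
Proof. by rewrite lt_def is_norm_ge0 is_norm_eq0 andbT. Qed.

Lemma is_norm_normalize {x} : x != 0 -> N ((N x)^-1 *: x) = 1.
Proof.
move=> x0; rewrite is_normZ ger0_norm ?invr_ge0 ?is_norm_ge0 // mulVf //.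
by rewrite is_norm_eq0.
Qed.

Lemma is_norm_sum {I : finType} {w : I -> R} (X : I -> 'rV[R]_n) :
  (forall i, 0 <= w i) -> N (\sum_i w i *: X i) <= \sum_i w i * N (X i).
Proof.
move=> w0; elim/big_rec2: _ => [|i y1 y2 _ h]; first by rewrite is_norm0.
case: hN => _ _ _ ND; apply: le_trans (ND _ _) _.
by rewrite is_normZ ger0_norm // lerD2l.
Qed.

Lemma fapp_le_norm {f c} : (forall x, N x <= 1 -> fapp f x <= c) ->
  forall x, fapp f x <= c * N x.
Proof.
move=> hf x; have [->|x0] := eqVneq x 0; first by rewrite fapp0r is_norm0 mulr0.
have := hf ((N x)^-1 *: x); rewrite is_norm_normalize // lexx fappZr => /(_ isT).
by rewrite mulrC ler_pdivrMr ?is_norm_gt0.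
Qed.

Lemma dual_unit_ball_le {f} : dual_unit_ball N f -> forall x, fapp f x <= N x.
Proof. by move=> hf x; rewrite -[N x]mul1r; apply: fapp_le_norm. Qed.

Lemma mx_eq0_on_unit_ball (D : 'M[R]_n) :
  (forall x, N x <= 1 -> x *m D = 0) -> D = 0.
Proof.
move=> D0; apply/row_matrixP => i; rewrite row0 rowE.
set x := delta_mx 0 i; have [->|x0] := eqVneq x 0; first by rewrite mul0mx.
move: (D0 ((N x)^-1 *: x)); rewrite is_norm_normalize // => /(_ (lexx _)) /eqP.
by rewrite -scalemxAl scaler_eq0 invr_eq0 is_norm_eq0 (negPf x0) => /eqP.
Qed.

End Norm.

Section ConvexHull.
Context {R : realType} {n m : nat} {V : 'I_m -> 'rV[R]_n}.

Lemma conv_hull_vertex j : conv_hull V (V j).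
Proof.
exists (fun i => (i == j)%:R); split.
- by move=> i; rewrite ler0n.
- by rewrite (bigD1 j) //= eqxx big1 ?addr0 // => i /negPf ->.
- rewrite (bigD1 j) //= eqxx scale1r big1 ?addr0 // => i /negPf ->.
  by rewrite scale0r.
Qed.

Lemma conv_hull_fapp_le f x c : conv_hull V x ->
  (forall j, fapp f (V j) <= c) -> fapp f x <= c.
Proof.
move=> [w [w0 w1 ->]] fV; rewrite fapp_sumr -[c]mul1r -w1 mulr_suml.
by apply: ler_sum => j _; rewrite fappZr ler_wpM2l.
Qed.

Lemma conv_hull_coord_le x j : conv_hull V x -> `|x 0 j| <= \sum_i `|V i 0 j|.
Proof.
move=> [w [w0 w1 ->]]; rewrite summxE; apply: le_trans (ler_norm_sum _ _ _) _.
apply: ler_sum => i _; rewrite mxE normrM ger0_norm // ler_piMl //.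
by rewrite -w1 ler_sum_term.
Qed.

End ConvexHull.

Section PolyhedralNorm.
Context {R : realType} {n m : nat} {N : 'rV[R]_n -> R} {V : 'I_m -> 'rV[R]_n}.
Hypotheses (hN : is_norm N) (hB : unit_ball N = conv_hull V).

Lemma unit_ball_conv x : N x <= 1 <-> conv_hull V x.
Proof. by rewrite -hB. Qed.

Lemma dual_unit_ballE : dual_unit_ball N = feasible V (fun=> 1).
Proof.
apply/funext => f; apply/propext; split => [hf j|hf x /unit_ball_conv xV].
  by rewrite fappC; apply/hf/unit_ball_conv/conv_hull_vertex.
by apply: conv_hull_fapp_le xV _ => j; rewrite fappC.
Qed.

Lemma dual_unit_ball_coord_le f :
  feasible V (fun=> 1) f -> forall j, `|f 0 j| <= N (delta_mx 0 j).
Proof.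
rewrite -dual_unit_ballE => hf j; rewrite ler_norml.
have := dual_unit_ball_le hN hf (delta_mx 0 j).
have := dual_unit_ball_le hN hf (- delta_mx 0 j).
by rewrite fappNr is_normN // fapp_delta; lra.
Qed.

Lemma norm_conic_le {l : 'I_m -> R} :
  (forall j, 0 <= l j) -> N (\sum_j l j *: V j) <= \sum_j l j.
Proof.
move=> l0; apply: le_trans (is_norm_sum hN V l0) _; apply: ler_sum => j _.
by rewrite ler_piMr //; apply/unit_ball_conv/conv_hull_vertex.
Qed.

Lemma norm_le_dual v s : (forall f, dual_unit_ball N f -> fapp f v <= s) -> N v <= s.
Proof.
move=> hs; rewrite leNgt; apply/negP => sv.
have [[l l0 e]|[y yV yv]] := farkas (fun j => row_mx (V j) (-1)%:M) (row_mx v (- s)%:M).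
  have ve : v = \sum_j l j *: V j.
    have := congr1 lsubmx e; rewrite row_mxKl linear_sum => ->.
    by apply: eq_bigr => j _; rewrite linearZ /= row_mxKl.
  have se : - s = \sum_j l j * -1.
    have := congr1 (fun M => rsubmx M 0 0) e; rewrite /= row_mxKr mxE eqxx mulr1n => ->.
    rewrite linear_sum summxE; apply: eq_bigr => j _.
    by rewrite linearZ /= row_mxKr !mxE eqxx mulr1n.
  by have := norm_conic_le l0; rewrite -ve; rewrite -mulr_suml in se; lra.
have yE : y = row_mx (lsubmx y) (rsubmx y 0 0)%:M by rewrite -mx11_scalar hsubmxK.
rewrite yE fapp_row_mx_scalar in yv.
set f := lsubmx y in yE yv; set mu := rsubmx y 0 0 in yE yv.
have fB x : N x <= 1 -> fapp f x <= mu.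
  move/unit_ball_conv/conv_hull_fapp_le; apply => j.
  by have := yV j; rewrite /= yE fapp_row_mx_scalar; lra.
suff : fapp f v <= mu * s by lra.
have [mu_gt0|mu_le0] := ltrP 0 mu.
  have : fapp (mu^-1 *: f) v <= s.
    by apply: hs => x /fB; rewrite fappZl mulrC ler_pdivrMr // mul1r.
  by rewrite fappZl mulrC ler_pdivrMr // mulrC.
have mu0 : mu = 0.
  by apply/le_anti; rewrite mu_le0 /=; have := fB 0; rewrite fapp0r is_norm0 // ler01; apply.
by rewrite mu0 mul0r; have := fapp_le_norm hN fB v; rewrite mu0 mul0r.
Qed.

Lemma exists_norming_vertex v : exists2 f, vertex V (fun=> 1) f & fapp f v = N v.
Proof.
have f0 : feasible V (fun=> 1) 0 by move=> j; rewrite fapp0r ler01.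
have [f vf fmax] := box_vertex_min _ (- v) dual_unit_ball_coord_le f0.
have f1 : dual_unit_ball N f by rewrite dual_unit_ballE; case: vf.
exists f => //; apply/eqP; rewrite eq_le dual_unit_ball_le //=.
apply: norm_le_dual => g; rewrite dual_unit_ballE => /fmax.
by rewrite !fappNl lerN2 fappC (fappC v).
Qed.

Lemma dual_extreme_points : exists q (F : 'I_q -> 'rV[R]_n),
  [/\ injective F, forall j, ext (dual_unit_ball N) (F j)
    & forall x, exists j, fapp (F j) x = N x].
Proof.
have [q [F [F_inj hF]]] := vertices_finite V (fun=> 1).
exists q, F; split => // [j|x].
  by rewrite dual_unit_ballE; apply/vertex_ext/hF; exists j.
by have [f /hF[j <-]] := exists_norming_vertex x; exists j.
Qed.

Context {q : nat} {F : 'I_q -> 'rV[R]_n}.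
Hypothesis F_dual : forall j, dual_unit_ball N (F j).
Hypothesis F_norming : forall x, exists j, fapp (F j) x = N x.

Lemma unit_ballE : unit_ball N = feasible F (fun=> 1).
Proof.
apply/funext => x; apply/propext; split => [x1 j|x1].
  exact: le_trans (dual_unit_ball_le hN (F_dual j) x) x1.
by rewrite /unit_ball /=; have [j <-] := F_norming x; apply: x1.
Qed.

Lemma primal_extreme_points : exists p (E : 'I_p -> 'rV[R]_n),
  [/\ injective E, forall i, ext (unit_ball N) (E i)
    & forall g, exists i, forall x, N x <= 1 -> fapp g x <= fapp g (E i)].
Proof.
have box u : feasible F (fun=> 1) u -> forall j, `|u 0 j| <= \sum_i `|V i 0 j|.
  by rewrite -unit_ballE hB => uV j; apply: conv_hull_coord_le.
have [p [E [E_inj hE]]] := vertices_finite F (fun=> 1).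
exists p, E; split => // [i|g].
  by rewrite unit_ballE; apply/vertex_ext/hE; exists i.
have e0 : feasible F (fun=> 1) 0 by rewrite -unit_ballE /unit_ball /= is_norm0 // ler01.
have [e /hE[i <-] emax] := box_vertex_min _ (- g) box e0.
exists i => x x1; have /emax : feasible F (fun=> 1) x by rewrite -unit_ballE.
by rewrite !fappNl lerN2.
Qed.

End PolyhedralNorm.

Section ProjectionParametrization.
Context {R : realType} {n : nat}.
Variable Y : 'M[R]_n.

Definition codim := \rank (kermx (row_base Y)^T).

Definition orthocomp_basis : 'M[R]_(codim, n) := row_base (kermx (row_base Y)^T).

Lemma codimE : codim = (n - \rank Y)%N.
Proof. by rewrite /codim mxrank_ker mxrank_tr eq_row_base. Qed.

Lemma row_base_orthocomp : row_base Y *m orthocomp_basis^T = 0.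
Proof.
have /sub_kermxP KB : (orthocomp_basis <= kermx (row_base Y)^T)%MS.
  by rewrite eq_row_base.
by rewrite -[LHS]trmxK trmx_mul trmxK KB trmx0.
Qed.

Lemma orthocomp_mulmx_eq0 (G : 'M[R]_(codim, \rank Y)) :
  orthocomp_basis^T *m G *m row_base Y = 0 -> G = 0.
Proof.
move=> KGB; have KG : orthocomp_basis^T *m G = 0.
  by apply: (row_free_inj (row_base_free Y)); rewrite KGB mul0mx.
have /eqP : G^T *m orthocomp_basis = 0 by rewrite -[LHS]trmxK trmx_mul trmxK KG trmx0.
by rewrite mulmx_free_eq0 ?row_base_free // -trmx0 => /eqP/trmx_inj.
Qed.

Variable Q0 : 'M[R]_(n, \rank Y).

Definition proj_of (G : 'M[R]_(codim, \rank Y)) : 'M[R]_n :=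
  (Q0 + orthocomp_basis^T *m G) *m row_base Y.

Hypothesis Q0_rinv : row_base Y *m Q0 = 1%:M.

Lemma proj_of_projection G : is_projection Y (proj_of G).
Proof.
split => [x|y]; first by rewrite mulmxA -(eq_row_base Y) submxMl.
rewrite -(eq_row_base Y) => /submxP[D ->].
rewrite /proj_of -mulmxA (mulmxA (row_base Y)) mulmxDr Q0_rinv mulmxA.
by rewrite (mulmxA (row_base Y)) row_base_orthocomp mul0mx addr0 mulmx1.
Qed.

Lemma projection_proj_of P : is_projection Y P -> exists G, P = proj_of G.
Proof.
move=> [PY Pid].
have BP : row_base Y *m P = row_base Y.
  apply/row_matrixP => i; rewrite row_mul Pid //.
  by rewrite (submx_trans (row_sub _ _)) ?eq_row_base.
have /submxP[Z PZ] : (P <= row_base Y)%MS.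
  by rewrite eq_row_base; apply/row_subP => i; rewrite rowE; apply: PY.
have YZ : row_base Y *m Z = 1%:M.
  by apply: (row_free_inj (row_base_free Y)); rewrite mul1mx -mulmxA -PZ.
have : ((Z - Q0)^T <= kermx (row_base Y)^T)%MS.
  by apply/sub_kermxP; rewrite -trmx_mul mulmxBr YZ Q0_rinv subrr trmx0.
rewrite -(eq_row_base (kermx _)) => /submxP[H eH].
exists H^T; rewrite PZ /proj_of -[orthocomp_basis^T *m _]trmx_mul -eH trmxK.
by rewrite addrC subrK.
Qed.

End ProjectionParametrization.

Arguments projection_proj_of {R n Y Q0} Q0_rinv {P}.

Lemma inf_minimum {R : realType} (S : set R) x : S x -> lbound S x -> inf S = x.
Proof.
move=> Sx Sx_lb; apply/eqP; rewrite eq_le (ge_inf (ex_intro _ x Sx_lb)) //=.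
by apply: lb_le_inf => //; exists x.
Qed.

Lemma ord_inj_into {T : finType} {A : {set T}} {m} : (m <= #|A|)%N ->
  exists g : 'I_m -> T, injective g /\ forall l, g l \in A.
Proof.
move=> mA; exists (fun l => enum_val (widen_ord mA l)); split => [l l'|l].
  by move/enum_val_inj/(congr1 val) => /= /val_inj.
exact: enum_valP.
Qed.

Section MinimalProjectionLP.
Context {R : realType} {n : nat} {N : 'rV[R]_n -> R} {Y : 'M[R]_n}.
Hypothesis hN : is_norm N.
Context {p q : nat} {E : 'I_p -> 'rV[R]_n} {F : 'I_q -> 'rV[R]_n}.
Hypotheses (E_inj : injective E) (F_inj : injective F).
Hypothesis E_ext : forall i, ext (unit_ball N) (E i).
Hypothesis F_ext : forall j, ext (dual_unit_ball N) (F j).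
Hypothesis F_norming : forall x, exists j, fapp (F j) x = N x.
Hypothesis E_support :
  forall g, exists i, forall x, N x <= 1 -> fapp g x <= fapp g (E i).

Lemma opnorm_leP P t :
  (forall i j, fapp (F j) (E i *m P) <= t) <-> opnorm N P <= t.
Proof.
have ubP s : (forall i j, fapp (F j) (E i *m P) <= s) ->
    ubound [set N (x *m P) | x in unit_ball N] s.
  move=> hs _ [x x1 <-]; have [j <-] := F_norming (x *m P).
  rewrite fapp_mulmx; have [i imax] := E_support (F j *m P^T).
  by apply: le_trans (imax x x1) _; rewrite -fapp_mulmx.
split => [ht|Pt i j].
  apply: ge_sup (ubP _ ht); exists (N (0 *m P)), 0 => //.
  by rewrite /unit_ball /= is_norm0 // ler01.
have [s hs] : exists s, forall i j, fapp (F j) (E i *m P) <= s.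
  exists (\sum_(ij : 'I_p * 'I_q) `|fapp (F ij.2) (E ij.1 *m P)|) => i' j'.
  apply: le_trans (ler_norm _) _.
  by apply: (ler_sum_term (fun ij => `|fapp (F ij.2) (E ij.1 *m P)|) (i', j')).
apply: le_trans Pt; apply: le_trans (dual_unit_ball_le hN (F_ext j).1 _) _.
by apply: (ub_le_sup (ex_intro _ s (ubP s hs))); exists (E i); first case: (E_ext i).
Qed.

Lemma opnorm_ge0 P : 0 <= opnorm N P.
Proof.
have [i _] := E_support 0; have [j Nj] := F_norming (E i *m P).
rewrite (le_trans (is_norm_ge0 hN (E i *m P))) // -Nj.
exact: (proj2 (opnorm_leP P _) (lexx _)).
Qed.

Lemma ext_pairing_eq0 (D : 'M[R]_n) t :
  (forall i j, fapp (F j) (E i *m D) = t) -> D = 0 /\ t = 0.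
Proof.
move=> hD; have ball j x : N x <= 1 -> fapp (F j) (x *m D) = t.
  move=> x1; rewrite fapp_mulmx; apply/eqP; rewrite eq_le.
  have [i1 h1] := E_support (F j *m D^T); have [i2 h2] := E_support (- (F j *m D^T)).
  rewrite (le_trans (h1 _ x1)) -?fapp_mulmx ?hD //=.
  by move: (h2 _ x1); rewrite !fappNl lerN2 -!fapp_mulmx hD.
have [j0 _] := F_norming 0.
have t0 : t = 0 by rewrite -(ball j0 0) ?mul0mx ?fapp0r // is_norm0 // ler01.
split => //; apply: (mx_eq0_on_unit_ball hN) => x x1.
by apply/eqP; rewrite -(is_norm_eq0 hN); have [j <-] := F_norming (x *m D); rewrite ball // t0.
Qed.

Context {Q0 : 'M[R]_(n, \rank Y)}.
Hypothesis Q0_rinv : row_base Y *m Q0 = 1%:M.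

Local Notation r := (codim Y * \rank Y + 1)%N.

(* An unknown (G, t) of the linear program is the row vector [mxvec G, t]. *)
Definition lp_mx (u : 'rV[R]_r) : 'M[R]_(codim Y, \rank Y) := vec_mx (lsubmx u).

Definition lp_bound (u : 'rV[R]_r) : R := rsubmx u 0 0.

Definition lp_point G t : 'rV[R]_r := row_mx (mxvec G) t%:M.

Lemma lp_mxK G t : lp_mx (lp_point G t) = G.
Proof. by rewrite /lp_mx row_mxKl mxvecK. Qed.

Lemma lp_boundK G t : lp_bound (lp_point G t) = t.
Proof. by rewrite /lp_bound row_mxKr mxE eqxx mulr1n. Qed.

Lemma lp_var_eq0 u : lp_mx u = 0 -> lp_bound u = 0 -> u = 0.
Proof.
move=> G0 t0; rewrite -(hsubmxK u) -[lsubmx u]vec_mxK -/(lp_mx u) G0 linear0.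
have -> : rsubmx u = 0 by apply/rowP => j; rewrite (ord1 j) [RHS]mxE.
exact: row_mx0.
Qed.

Definition lp_lin (ij : 'I_p * 'I_q) (u : 'rV[R]_r) : R :=
  fapp (F ij.2) (E ij.1 *m ((orthocomp_basis Y)^T *m lp_mx u *m row_base Y)) - lp_bound u.

Definition lp_row ij : 'rV[R]_r := \row_l lp_lin ij (delta_mx 0 l).

Definition lp_rhs ij : R := - fapp (F ij.2) (E ij.1 *m (Q0 *m row_base Y)).

Lemma fapp_lp_row ij u : fapp (lp_row ij) u = lp_lin ij u.
Proof.
apply/esym/fapp_linear => c v w; rewrite /lp_lin /lp_mx /lp_bound !linearP /= !mxE.
by rewrite mulmxDl -scalemxAl mulmxDr -scalemxAr fappDr fappZr; ring.
Qed.

Lemma lp_slack ij u : fapp (lp_row ij) u - lp_rhs ij =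
  fapp (F ij.2) (E ij.1 *m proj_of Y Q0 (lp_mx u)) - lp_bound u.
Proof. by rewrite fapp_lp_row /lp_lin /lp_rhs /proj_of mulmxDl mulmxDr fappDr; ring. Qed.

Lemma lp_feasibleE u :
  feasible lp_row lp_rhs u <-> opnorm N (proj_of Y Q0 (lp_mx u)) <= lp_bound u.
Proof.
split => [h|/opnorm_leP h [i j]]; last by have := lp_slack (i, j) u; have := h i j; lra.
by apply/opnorm_leP => i j; have := lp_slack (i, j) u; have := h (i, j); lra.
Qed.

Lemma lp_activeE u ij : (ij \in active lp_row lp_rhs u) =
  (fapp (F ij.2) (E ij.1 *m proj_of Y Q0 (lp_mx u)) == lp_bound u).
Proof. by rewrite inE -subr_eq0 lp_slack subr_eq0. Qed.

Lemma lp_pointed : pointed lp_row lp_rhs.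
Proof.
move=> u d hs.
have lin0 ij : lp_lin ij d = 0.
  apply/eqP; apply: contraT => d0.
  have := hs ((lp_rhs ij - fapp (lp_row ij) u + 1) / lp_lin ij d) ij.
  by rewrite fappDr fappZr (fapp_lp_row ij d) divfK //; lra.
have [|D0 t0] := ext_pairing_eq0 ((orthocomp_basis Y)^T *m lp_mx d *m row_base Y) (lp_bound d).
  by move=> i j; have := lin0 (i, j); rewrite /lp_lin; lra.
by apply: (lp_var_eq0 _ _ t0); apply: orthocomp_mulmx_eq0.
Qed.

Lemma lp_min : exists2 v, vertex lp_row lp_rhs v &
  forall u, feasible lp_row lp_rhs u -> lp_bound v <= lp_bound u.
Proof.
pose cost : 'rV[R]_r := delta_mx 0 (rshift _ ord0).
have costE u : fapp cost u = lp_bound u by rewrite fappC fapp_delta /lp_bound mxE.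
have u0 : feasible lp_row lp_rhs (lp_point 0 (opnorm N (proj_of Y Q0 0))).
  by apply/lp_feasibleE; rewrite lp_mxK lp_boundK.
have [|v vv vmin] := exists_vertex_min cost 0 lp_pointed _ u0.
  by move=> u /lp_feasibleE; rewrite costE; apply/le_trans/opnorm_ge0.
by exists v => // u /vmin; rewrite !costE.
Qed.

Section OptimalVertex.
Variable v : 'rV[R]_r.
Hypothesis v_vertex : vertex lp_row lp_rhs v.
Hypothesis v_min : forall u, feasible lp_row lp_rhs u -> lp_bound v <= lp_bound u.

Lemma lp_min_le_opnorm G : lp_bound v <= opnorm N (proj_of Y Q0 G).
Proof.
have := v_min (lp_point G (opnorm N (proj_of Y Q0 G))).
by rewrite lp_feasibleE lp_mxK !lp_boundK; apply.
Qed.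

Lemma lp_min_opnorm : opnorm N (proj_of Y Q0 (lp_mx v)) = lp_bound v.
Proof.
apply/eqP; rewrite eq_le lp_min_le_opnorm andbT.
by apply/lp_feasibleE; case: v_vertex.
Qed.

Lemma lp_min_minimal : minimal_projection N Y (proj_of Y Q0 (lp_mx v)).
Proof.
split; first exact: proj_of_projection.
rewrite /lambda lp_min_opnorm; apply/esym/inf_minimum.
  by exists (proj_of Y Q0 (lp_mx v)); [exact: proj_of_projection | exact: lp_min_opnorm].
by move=> _ [P /(projection_proj_of Q0_rinv) [G ->] <-]; apply: lp_min_le_opnorm.
Qed.

Lemma lp_min_norming ij : ij \in active lp_row lp_rhs v ->
  norming_pair N (proj_of Y Q0 (lp_mx v)) (E ij.1) (F ij.2).
Proof. by rewrite lp_activeE -lp_min_opnorm => /eqP; split. Qed.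

End OptimalVertex.

Lemma minimal_projection_norming_pairs : exists P, minimal_projection N Y P /\
  exists pr : 'I_(codim Y * \rank Y + 1) -> 'rV[R]_n * 'rV[R]_n,
    injective pr /\ forall l, norming_pair N P (pr l).1 (pr l).2.
Proof.
have [v vv vmin] := lp_min.
exists (proj_of Y Q0 (lp_mx v)); split; first exact: lp_min_minimal.
have [g [g_inj g_act]] := ord_inj_into (card_active_vertex vv).
exists (fun l => (E (g l).1, F (g l).2)); split => [l l' [/E_inj e1 /F_inj e2]|l].
  by apply: g_inj; move: e1 e2; case: (g l) => ? ?; case: (g l') => ? ? /= -> ->.
exact: lp_min_norming.
Qed.

End MinimalProjectionLP.

Theorem mainTheorem3 (R : realType) (n k : nat) (N : 'rV[R]_n -> R)
    (Y : 'M[R]_n) :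
  polyhedral_norm N -> (1 <= k)%N -> (k <= n - 1)%N -> \rank Y = k ->
  exists P : 'M[R]_n, minimal_projection N Y P /\
    exists p : 'I_n -> 'rV[R]_n * 'rV[R]_n,
      injective p /\ forall i, norming_pair N P (p i).1 (p i).2.
Proof.
move=> [hN [m [V hB]]] k1 kn rk.
have [q [F [F_inj F_ext F_norming]]] := dual_extreme_points hN hB.
have F_dual j : dual_unit_ball N (F j) by case: (F_ext j).
have [p [E [E_inj E_ext E_support]]] := primal_extreme_points hN hB F_dual F_norming.
have /row_freeP[Q0 Q0_rinv] := row_base_free Y.
have [P [minP [pr [pr_inj pr_norming]]]] :=
  minimal_projection_norming_pairs hN E_inj F_inj E_ext F_ext F_norming E_support Q0_rinv.
have nr : (n <= codim Y * \rank Y + 1)%N by rewrite codimE rk; nia.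
exists P; split => //; exists (pr \o widen_ord nr); split => [l l'|l]; last exact: pr_norming.
by move/pr_inj/(congr1 val) => /= /val_inj.
Qed.
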